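(* For a $q$-spin system with interaction matrix $\mathbf{B}$ and $\Delta\geq3$, \[\max_{\boldsymbol{\alpha},\boldsymbol{\beta}\in\triangle_q}\Psi_1(\boldsymbol{\alpha},\boldsymbol{\beta})=\max_{\mathbf{r},\mathbf{c}}\Phi(\mathbf{r},\mathbf{c}).\]
   Context: $\mathbf{B}=(B_{ij})$ is a symmetric $q\times q$ nonnegative matrix (irreducible, standing assumption); $\triangle_q$ is the probability simplex in $\mathbb{R}^q$. $\Psi_1(\boldsymbol{\alpha},\boldsymbol{\beta})=\max_{\mathbf{x}}[(\Delta-1)(\sum_i\alpha_i\ln\alpha_i+\sum_j\beta_j\ln\beta_j)+\Delta\sum_{i,j}x_{ij}(\ln B_{ij}-\ln x_{ij})]$ over nonnegative $\mathbf{x}\in\mathbb{R}^{q\times q}$ with $\sum_jx_{ij}=\alpha_i$, $\sum_ix_{ij}=\beta_j$ (conventions $\ln0=-\infty$, $0\ln0=0$); it equals $\lim_n\frac1n\log\mathbf{E}[Z_G^{\boldsymbol{\alpha},\boldsymbol{\beta}}]$ for a random $\Delta$-regular bipartite graph formed as the union of $\Delta$ random perfect matchings on $n+n$ vertices. With $p=\Delta/(\Delta-1)$, for nonnegative nonzero $\mathbf{r},\mathbf{c}\in\mathbb{R}^q$, $\Phi$ is defined by $\exp(\Phi(\mathbf{r},\mathbf{c})/\Delta)=\frac{\mathbf{r}^{\intercal}\mathbf{B}\mathbf{c}}{\|\mathbf{r}\|_p\|\mathbf{c}\|_p}$. *)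

From HB Require Import structures.
From mathcomp Require Import all_boot all_order all_algebra.
From mathcomp Require Import all_classical all_reals all_analysis.
Set Implicit Arguments. Unset Strict Implicit. Unset Printing Implicit Defensive.
Import Order.TTheory GRing.Theory Num.Theory.
Local Open Scope ring_scope.
Local Open Scope classical_set_scope.

Section Defs.
Variable R : realType.
Variable q : nat.

Definition simplex (a : 'I_q -> R) : Prop :=
  (forall i, 0 <= a i) /\ \sum_(i < q) a i = 1.

Definition xlnx (t : R) : R := if t == 0 then 0 else t * ln t.

(* x (ln b - ln x) with ln 0 = -oo and 0 ln 0 = 0 (and 0 * (-oo) = 0) *)
Definition xterm (b t : R) : \bar R :=
  if t == 0 then 0%E
  else if b == 0 then -oo%E
  else (t * (ln b - ln t))%:E.

Definition sym_nonneg_irreducible (B : 'M[R]_q) : Prop :=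
  (forall i j, B i j = B j i) /\ (forall i j, 0 <= B i j) /\
  (forall i j, exists k : nat, 0 < (B ^+ k) i j).

Definition coupling (a b : 'I_q -> R) (x : 'I_q -> 'I_q -> R) : Prop :=
  (forall i j, 0 <= x i j) /\
  (forall i, \sum_(j < q) x i j = a i) /\
  (forall j, \sum_(i < q) x i j = b j).

Definition psi1_obj (D : nat) (B : 'M[R]_q) (a b : 'I_q -> R)
    (x : 'I_q -> 'I_q -> R) : \bar R :=
  (((D%:R - 1) * (\sum_(i < q) xlnx (a i) + \sum_(j < q) xlnx (b j)))%:E
   + (D%:R)%:E * (\sum_(i < q) \sum_(j < q) xterm (B i j) (x i j)))%E.

Definition Psi1 (D : nat) (B : 'M[R]_q) (a b : 'I_q -> R) : \bar R :=
  ereal_sup [set psi1_obj D B a b x | x in coupling a b].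

Definition pnorm (p : R) (r : 'I_q -> R) : R :=
  (\sum_(i < q) r i `^ p) `^ (p^-1).

Definition bilin (B : 'M[R]_q) (r c : 'I_q -> R) : R :=
  \sum_(i < q) \sum_(j < q) r i * B i j * c j.

Definition Phi (D : nat) (B : 'M[R]_q) (r c : 'I_q -> R) : \bar R :=
  let p := D%:R / (D%:R - 1) in
  if bilin B r c == 0 then (-oo)%E
  else (D%:R * ln (bilin B r c / (pnorm p r * pnorm p c)))%:E.

Definition nonneg_nonzero (r : 'I_q -> R) : Prop :=
  (forall i, 0 <= r i) /\ (exists i, r i != 0).

End Defs.

(* Put s = D - 1 and let M be the maximum of
     G(w, z) = sum_ij w_i^s B_ij z_j^s
   over nonnegative w, z with sum_i w_i^(s+1) = sum_j z_j^(s+1) = 1; both maxima equal D ln M.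
   - Phi <= D ln M: r / |r|_p, raised to the power 1/s, lies on that sphere (p = D / (D - 1)),
     and G there is exactly the ratio r^T B c / (|r|_p |c|_p).
   - Psi_1 <= D ln M: write alpha = w^(s+1), beta = z^(s+1); Gibbs' inequality (ln y <= y - 1)
     bounds the energy-entropy term of any coupling by ln G(w, z) minus the entropies of
     alpha and beta, which cancel the (D - 1)-weighted entropies in Psi_1.
   - Equality: at a maximiser (w, z) the equality case of Hoelder's inequality gives the
     stationarity equations w_i^(s+1) M = w_i^s (B z^s)_i and z_j^(s+1) M = z_j^s (w^s B)_j,
     so x_ij = w_i^s B_ij z_j^s / M couples (w^(s+1), z^(s+1)) with value D ln M, while
     Phi(w^s, z^s) = D ln G(w, z) = D ln M. *)

From HB Require Import structures.
From mathcomp Require Import all_boot all_order all_algebra.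
From mathcomp Require Import all_classical all_reals all_analysis.
From mathcomp Require Import ring lra.
Import Order.TTheory GRing.Theory Num.Theory numFieldNormedType.Exports.
Set Implicit Arguments. Unset Strict Implicit. Unset Printing Implicit Defensive.
Local Open Scope ring_scope.

Section AGM.
Variable R : realType.

Lemma leif_AGM_pow (s : nat) (a b : R) : (0 < s)%N -> 0 <= a -> 0 <= b ->
  a ^+ s * b <= (s%:R * a ^+ s.+1 + b ^+ s.+1) / s.+1%:R ?= iff (a == b).
Proof.
move=> s0 a0 b0.
pose E (i : 'I_s.+1) := if (i < s)%N then a ^+ s.+1 else b ^+ s.+1.
have E0 : {in predT, forall i, 0 <= E i}.
  by move=> i _; rewrite /E; case: ifP => _; exact: exprn_ge0.
have EaE (i : 'I_s.+1) : (i < s)%N -> E i = a ^+ s.+1 by rewrite /E => ->.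
have prodE : \prod_(i in predT) E i = (a ^+ s * b) ^+ s.+1.
  rewrite big_ord_recr (eq_bigr _ (fun i _ => EaE (widen_ord (leqnSn s) i) (ltn_ord i))) /E ltnn.
  by rewrite prodr_const card_ord exprMn -!exprM mulnC.
have sumE : \sum_(i in predT) E i = s%:R * a ^+ s.+1 + b ^+ s.+1.
  rewrite big_ord_recr (eq_bigr _ (fun i _ => EaE (widen_ord (leqnSn s) i) (ltn_ord i))) /E ltnn.
  by rewrite sumr_const card_ord mulr_natl.
have := leif_AGM E0; rewrite card_ord prodE sumE => -[le_pow eq_pow].
set mu := _ / _ in le_pow eq_pow *.
have mu0 : 0 <= mu by rewrite divr_ge0 ?addr_ge0 ?mulr_ge0 ?exprn_ge0.
have ab0 : 0 <= a ^+ s * b by rewrite mulr_ge0 ?exprn_ge0.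
split; first by rewrite -(ler_pXn2r (ltn0Sn s)) ?nnegrE.
rewrite -(eqrXn2 (ltn0Sn s) ab0 mu0) eq_pow; apply/idP/idP.
  move=> /forallP /(_ ord0) /forall_inP /(_ ord_max isT).
  by rewrite /E /= s0 ltnn eqrXn2.
by move=> /eqP ab; apply/forallP => i; apply/forall_inP => j _; rewrite /E ab; do 2 case: ifP.
Qed.

End AGM.

Section Norms.
Variables (R : realType) (q : nat).
Implicit Types (s : nat) (p : R) (r u v w : 'I_q -> R).

Lemma powR_div (a b p : R) : 0 <= a -> 0 <= b -> (a / b) `^ p = a `^ p / b `^ p.
Proof.
move=> a0 b0; rewrite powRM ?invr_ge0 //.
by rewrite -powR_inv1 // powRAC powR_inv1 // powR_ge0.
Qed.

Lemma powR_root (n : nat) (a : R) : (0 < n)%N -> 0 <= a -> (a `^ n%:R^-1) ^+ n = a.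
Proof.
move=> n0 a0.
by rewrite -powR_mulrn ?powR_ge0 // -powRrM mulVf ?pnatr_eq0 -?lt0n // powRr1.
Qed.

Lemma pnorm_gt0 p r : nonneg_nonzero r -> 0 < pnorm p r.
Proof.
move=> [r0 [i ri]]; rewrite /pnorm powR_gt0 //.
apply: (@lt_le_trans _ _ (r i `^ p)); first by rewrite powR_gt0 // lt0r ri r0.
by rewrite (bigD1 i) //= lerDl sumr_ge0 // => j _; exact: powR_ge0.
Qed.

Lemma sum_powR_div_pnorm p r : 0 < p -> nonneg_nonzero r ->
  \sum_i (r i / pnorm p r) `^ p = 1.
Proof.
move=> p0 hr; have N0 := pnorm_gt0 p hr; have [r0 _] := hr.
have NS : pnorm p r `^ p = \sum_i r i `^ p.
  rewrite /pnorm -powRrM mulVf ?gt_eqF // powRr1 //.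
  by rewrite sumr_ge0 // => i _; exact: powR_ge0.
rewrite (eq_bigr (fun i => r i `^ p / pnorm p r `^ p)); last first.
  by move=> i _; rewrite powR_div ?(ltW N0).
by rewrite -mulr_suml -NS divff // gt_eqF // powR_gt0.
Qed.

Definition nonneg_sphere s w := (forall i, 0 <= w i) /\ \sum_i w i ^+ s.+1 = 1.

Lemma nonneg_sphere_nonzero s w : nonneg_sphere s w -> nonneg_nonzero w.
Proof.
move=> [w0 w1]; split=> //; apply/not_existsP => wz.
move: w1; rewrite big1 => [/eqP|i _]; first by rewrite eq_sym oner_eq0.
by have /negP := wz i; rewrite negbK => /eqP ->; rewrite expr0n.
Qed.

(* Hoelder's inequality for the exponents (s+1)/s and s+1, with its equality case,
   obtained by summing the two-point AM-GM inequality. *)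
Lemma nonneg_sphere_dot_leif s w u : (0 < s)%N ->
  nonneg_sphere s w -> nonneg_sphere s u ->
  \sum_i w i ^+ s * u i <= 1 ?= iff [forall i, w i == u i].
Proof.
move=> s0 [w0 w1] [u0 u1].
have <- : \sum_i (s%:R * w i ^+ s.+1 + u i ^+ s.+1) / s.+1%:R = 1.
  rewrite -mulr_suml big_split /= -mulr_sumr w1 u1 mulr1 natr1 divff // pnatr_eq0.
by have := leif_sum (P := predT) (fun i _ => leif_AGM_pow s0 (w0 i) (u0 i)).
Qed.

(* The competitor u = v / |v|_(s+1) gives |v|_(s+1) <= M, Hoelder gives M <= |v|_(s+1),
   and equality in Hoelder forces w = u. *)
Lemma nonneg_sphere_argmax_stationary s v w : (0 < s)%N -> (forall i, 0 <= v i) ->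
  nonneg_sphere s w ->
  (forall u, nonneg_sphere s u -> \sum_i u i ^+ s * v i <= \sum_i w i ^+ s * v i) ->
  0 < \sum_i w i ^+ s * v i ->
  forall i, w i ^+ s.+1 * (\sum_k w k ^+ s * v k) = w i ^+ s * v i.
Proof.
move=> s0 v0 Sw wmax; set M := \sum_k _ => M0.
have hv : nonneg_nonzero v.
  split=> //; apply/not_existsP => vz; move: M0; rewrite /M big1 ?ltxx // => i _.
  by have /negP := vz i; rewrite negbK => /eqP ->; rewrite mulr0.
set N := pnorm s.+1%:R v; have N0 : 0 < N := pnorm_gt0 _ hv.
pose u i := v i / N.
have vNu i : v i = N * u i by rewrite /u mulrC divfK ?gt_eqF.
have Su : nonneg_sphere s u.
  split=> [i|]; first by rewrite divr_ge0 ?(ltW N0).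
  rewrite -(sum_powR_div_pnorm (ltr0Sn _ s) hv); apply: eq_bigr => i _.
  by rewrite powR_mulrn ?divr_ge0 ?(ltW N0).
have NM : N <= M.
  have := wmax u Su; congr (_ <= _).
  under eq_bigr do rewrite vNu mulrCA -exprSr.
  by rewrite -mulr_sumr Su.2 mulr1.
have [le1 eq1] := nonneg_sphere_dot_leif s0 Sw Su.
have wuM : \sum_i w i ^+ s * u i = M / N.
  by rewrite /M mulr_suml; apply: eq_bigr => i _; rewrite /u mulrA.
have MN : M = N.
  by apply/eqP; rewrite eq_le NM andbT -[N in M <= N]mul1r -ler_pdivrMr // -wuM.
have /forallP wu : [forall i, w i == u i].
  by rewrite -eq1 wuM MN divff ?eqxx // gt_eqF.
by move=> i; rewrite exprSr -mulrA; congr (_ * _); rewrite (eqP (wu i)) MN mulrC -vNu.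
Qed.

End Norms.

Section Maximizer.
Variables (R : realType) (q : nat).
Implicit Types (B : 'M[R]_q) (r c u w z : 'I_q -> R).
Local Open Scope classical_set_scope.

Definition bilin_pow (s : nat) (B : 'M[R]_q) (w z : 'I_q -> R) :=
  bilin B (fun i => w i ^+ s) (fun j => z j ^+ s).

Definition unit_vec (k : 'I_q) : 'I_q -> R := fun i => (i == k)%:R.

Lemma nonneg_sphere_unit_vec s k : nonneg_sphere s (unit_vec k).
Proof.
split=> [i|]; first exact: ler0n.
rewrite (bigD1 k) //= big1 ?addr0 => [|i /negPf ik]; first by rewrite /unit_vec eqxx expr1n.
by rewrite /unit_vec ik expr0n.
Qed.

Lemma coord_pow_continuous (T : topologicalType) (f : T -> 'rV[R]_q) i n :
  continuous f -> continuous (fun t => f t ord0 i ^+ n).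
Proof.
move=> fc t.
have ci : continuous (fun t => f t ord0 i).
  move=> u; exact: (continuous_comp (fc u) (@coord_continuous R _ _ ord0 i _)).
exact: continuous_comp (ci t) (@exprn_continuous R n _).
Qed.

Lemma nonneg_sphere_rV_compact s :
  compact [set v : 'rV[R]_q | nonneg_sphere s (v ord0)].
Proof.
pose sumpow (v : 'rV[R]_q) := \sum_i v ord0 i ^+ s.+1.
have sumpow_cont : continuous sumpow.
  move=> v; apply: cvg_big.
  - exact: add_continuous.
  - exact: nbhs_filter.
  by move=> i _; exact: (@coord_pow_continuous _ id i s.+1 (fun _ => cvg_id) v).
apply: (@subclosed_compact _ _ [set v : 'rV[R]_q | forall i, `[(0 : R), 1]%classic (v ord0 i)]).
- have -> : [set v : 'rV[R]_q | nonneg_sphere s (v ord0)] =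
      \bigcap_(i in setT) ((fun v : 'rV[R]_q => v ord0 i) @^-1` [set x | 0 <= x])
      `&` sumpow @^-1` [set x | x = 1].
    by apply/seteqP; split=> v [v0 v1]; split=> // i *; apply: v0.
  apply: closedI; last by move: sumpow_cont => /continuous_closedP; apply; exact: closed_eq.
  apply: closed_bigI => i _.
  by move: (@coord_continuous R 1 q ord0 i) => /continuous_closedP; apply; exact: closed_ge.
- by apply: (@rV_compact _ _ (fun=> `[(0 : R), 1]%classic)) => _; exact: segment_compact.
- move=> v [v0 v1] i; rewrite /= in_itv /= v0 /= leNgt; apply/negP => v1i.
  have : v ord0 i ^+ s.+1 <= 1.
    by rewrite -v1 (bigD1 i) //= lerDl sumr_ge0 // => j _; exact: exprn_ge0.
  by rewrite leNgt exprn_egt1.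
Qed.

Lemma bilin_pow_max_attained s (B : 'M[R]_q) : (0 < q)%N ->
  exists w z, [/\ nonneg_sphere s w, nonneg_sphere s z &
    forall w' z', nonneg_sphere s w' -> nonneg_sphere s z' ->
      bilin_pow s B w' z' <= bilin_pow s B w z].
Proof.
move=> q0; set S := [set v : 'rV[R]_q | nonneg_sphere s (v ord0)].
pose f (p : 'rV[R]_q * 'rV[R]_q) := bilin_pow s B (p.1 ord0) (p.2 ord0).
have fc : continuous f.
  move=> p; apply: cvg_big => [|i _]; first exact: add_continuous.
  apply: cvg_big => [|j _]; first exact: add_continuous.
  apply: cvgM; [apply: cvgM; last exact: cvg_cst|].
  - exact: (@coord_pow_continuous _ fst i s (fun _ => cvg_fst) p).
  - exact: (@coord_pow_continuous _ snd j s (fun _ => cvg_snd) p).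
have rowK (w : 'I_q -> R) : (\row_i w i) ord0 = w by apply/funext => i; rewrite mxE.
have Se : S (\row_i unit_vec (Ordinal q0) i) by rewrite /S /= rowK; exact: nonneg_sphere_unit_vec.
have [[wv zv] /set_mem [Sw Sz] wzmax] := @compact_EVT_max _ _ f (S `*` S)
  (ex_intro _ (_, _) (conj Se Se))
  (compact_setX (@nonneg_sphere_rV_compact s) (@nonneg_sphere_rV_compact s))
  (continuous_subspaceT fc).
exists (wv ord0), (zv ord0); split=> // w' z' Sw' Sz'.
have := wzmax (\row_i w' i, \row_j z' j); rewrite /f /= !rowK; apply.
by apply/mem_set; split; rewrite /S /= rowK.
Qed.

Lemma ler_bilin_term B r c i j : (forall i j, 0 <= B i j) ->
  (forall i, 0 <= r i) -> (forall j, 0 <= c j) -> r i * B i j * c j <= bilin B r c.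
Proof.
move=> B0 r0 c0; rewrite /bilin (bigD1 i) //= (bigD1 j) //= -addrA lerDl.
by rewrite addr_ge0 ?sumr_ge0 // => *; rewrite ?sumr_ge0 // => *; rewrite !mulr_ge0.
Qed.

Lemma bilin_pow_argmax_stationary s B w z : (0 < s)%N -> (forall i j, 0 <= B i j) ->
  nonneg_sphere s w -> nonneg_sphere s z ->
  (forall w' z', nonneg_sphere s w' -> nonneg_sphere s z' ->
     bilin_pow s B w' z' <= bilin_pow s B w z) ->
  0 < bilin_pow s B w z ->
  (forall i, w i ^+ s.+1 * bilin_pow s B w z = w i ^+ s * \sum_j B i j * z j ^+ s) /\
  (forall j, z j ^+ s.+1 * bilin_pow s B w z = z j ^+ s * \sum_i w i ^+ s * B i j).
Proof.
move=> s0 B0 Sw Sz wz_max M0; have [w0 _] := Sw; have [z0 _] := Sz.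
have row_sum u : \sum_i u i ^+ s * (\sum_j B i j * z j ^+ s) = bilin_pow s B u z.
  by apply: eq_bigr => i _; rewrite mulr_sumr; apply: eq_bigr => j _; rewrite mulrA.
have col_sum u : \sum_j u j ^+ s * (\sum_i w i ^+ s * B i j) = bilin_pow s B w u.
  rewrite /bilin_pow /bilin exchange_big; apply: eq_bigr => j _.
  by rewrite mulr_sumr; apply: eq_bigr => i _; rewrite mulrC.
split.
- have := @nonneg_sphere_argmax_stationary _ _ s (fun i => \sum_j B i j * z j ^+ s) w s0.
  rewrite row_sum; apply => // [i|u Su]; last by rewrite !row_sum wz_max.
  by rewrite sumr_ge0 // => j _; rewrite mulr_ge0 ?exprn_ge0.
- have := @nonneg_sphere_argmax_stationary _ _ s (fun j => \sum_i w i ^+ s * B i j) z s0.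
  rewrite col_sum; apply => // [j|u Su]; last by rewrite !col_sum wz_max.
  by rewrite sumr_ge0 // => i _; rewrite mulr_ge0 ?exprn_ge0.
Qed.

End Maximizer.

Section Couplings.
Variables (R : realType) (q : nat).
Implicit Types (x : 'I_q -> 'I_q -> R) (a b : 'I_q -> R).

Lemma coupling_le_row a b x i j : coupling a b x -> x i j <= a i.
Proof.
by move=> [x0 [xr _]]; rewrite -xr (bigD1 j) //= lerDl sumr_ge0.
Qed.

Lemma coupling_le_col a b x i j : coupling a b x -> x i j <= b j.
Proof.
by move=> [x0 [_ xc]]; rewrite -xc (bigD1 i) //= lerDl sumr_ge0.
Qed.

Lemma coupling_sum a b x : coupling a b x -> \sum_i \sum_j x i j = \sum_i a i.
Proof. by move=> [_ [xr _]]; apply: eq_bigr => i _; rewrite xr. Qed.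

Lemma simplex_coupling_neq0 a b x : simplex a -> coupling a b x ->
  exists i j, x i j != 0.
Proof.
move=> [_ a1] hx; apply/not_existsP => x0.
have : \sum_i \sum_j x i j = 0.
  apply: big1 => i _; apply: big1 => j _; apply/eqP/negPn/negP => xij.
  by apply: (x0 i); exists j.
by rewrite (coupling_sum hx) a1 => /eqP; rewrite oner_eq0.
Qed.

Lemma coupling_sum_separable a b x (L : R) (f g : 'I_q -> R) : coupling a b x ->
  \sum_i \sum_j x i j * (L - f i - g j) =
  L * \sum_i a i - \sum_i a i * f i - \sum_j b j * g j.
Proof.
move=> [_ [xr xc]].
transitivity (\sum_i \sum_j (x i j * L) - \sum_i \sum_j (x i j * f i)
              - \sum_i \sum_j (x i j * g j)).
  rewrite -!sumrB; apply: eq_bigr => i _; rewrite -!sumrB.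
  by apply: eq_bigr => j _; rewrite !mulrBr.
congr (_ - _ - _).
- by rewrite mulr_sumr; apply: eq_bigr => i _; rewrite -mulr_suml xr mulrC.
- by apply: eq_bigr => i _; rewrite -mulr_suml xr.
- by rewrite exchange_big; apply: eq_bigr => j _; rewrite -mulr_suml xc.
Qed.

End Couplings.

Section Entropy.
Variables (R : realType) (q : nat).
Implicit Types (B : 'M[R]_q) (x : 'I_q -> 'I_q -> R) (a b r c : 'I_q -> R).

Definition xtermR (b t : R) : R := if t == 0 then 0 else t * (ln b - ln t).

Lemma sum_xterm_EFin B x : (forall i j, x i j != 0 -> B i j != 0) ->
  (\sum_i \sum_j xterm (B i j) (x i j) = (\sum_i \sum_j xtermR (B i j) (x i j))%:E)%E.
Proof.
move=> xB; rewrite -sumEFin; apply: eq_bigr => i _; rewrite -sumEFin.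
apply: eq_bigr => j _; rewrite /xterm /xtermR.
by case: eqVneq => // /xB /negPf ->.
Qed.

Lemma sum_xterm_Ny B x k l : x k l != 0 -> B k l = 0 ->
  (\sum_i \sum_j xterm (B i j) (x i j) = -oo)%E.
Proof.
move=> xkl Bkl; apply/esum_eqNyP; exists k; split; rewrite ?mem_index_enum //.
apply/esum_eqNyP; exists l; split; rewrite ?mem_index_enum //.
by rewrite /xterm (negPf xkl) Bkl eqxx.
Qed.

(* Gibbs' inequality for one entry: ln y <= y - 1 with y = r b c / (M t). *)
Lemma xtermR_le (b t r c M : R) :
  0 <= b -> 0 <= r -> 0 <= c -> 0 <= t -> 0 < M ->
  (t != 0 -> [/\ 0 < b, 0 < r & 0 < c]) ->
  xtermR b t <= t * (ln M - ln r - ln c) + (r * b * c / M - t).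
Proof.
move=> b0 r0 c0 t0 M0 supp; rewrite /xtermR.
case: eqVneq => [->|/[dup] tn0 /supp [{}b0 {}r0 {}c0]].
  by rewrite mul0r add0r subr0 divr_ge0 ?mulr_ge0 ?(ltW M0).
have {t0 tn0} t0 : 0 < t by rewrite lt0r tn0.
set y := r * b * c / (M * t).
have y0 : 0 < y by rewrite divr_gt0 ?mulr_gt0.
have ty : t * y = r * b * c / M by rewrite /y; field; rewrite !gt_eqF.
have lny : ln y = ln r + ln b + ln c - (ln M + ln t).
  by rewrite /y ln_div ?lnM ?posrE ?mulr_gt0.
have : t * ln y <= t * y - t.
  rewrite -[X in _ - X]mulr1 -mulrBr ler_wpM2l ?(ltW t0) //.
  by have := @le_ln1Dx R (y - 1); rewrite [1 + _]addrC subrK; apply; lra.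
rewrite lny ty; lra.
Qed.

Lemma sum_xtermR_le B a b x r c (M : R) : (forall i j, 0 <= B i j) ->
  (forall i, 0 <= r i) -> (forall j, 0 <= c j) -> simplex a -> coupling a b x ->
  (forall i j, x i j != 0 -> [/\ 0 < B i j, 0 < r i & 0 < c j]) ->
  0 < M -> bilin B r c <= M ->
  \sum_i \sum_j xtermR (B i j) (x i j) <=
    ln M - \sum_i a i * ln (r i) - \sum_j b j * ln (c j).
Proof.
move=> B0 r0 c0 [_ a1] hx supp M0 rBcM.
apply: (@le_trans _ _ (\sum_i \sum_j (x i j * (ln M - ln (r i) - ln (c j))
                         + (r i * B i j * c j / M - x i j)))).
  apply: ler_sum => i _; apply: ler_sum => j _.
  exact: xtermR_le (B0 i j) (r0 i) (c0 j) (hx.1 i j) M0 (supp i j).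
have rBc_le1 : \sum_i \sum_j r i * B i j * c j / M <= 1.
  under eq_bigr do rewrite -mulr_suml.
  by rewrite -mulr_suml ler_pdivrMr // mul1r.
under eq_bigr do rewrite big_split sumrB.
rewrite big_split sumrB /= (coupling_sum_separable _ _ _ hx) (coupling_sum hx) a1 mulr1.
lra.
Qed.

Lemma xtermR_prod (b r c M : R) : 0 <= b -> 0 <= r -> 0 <= c -> 0 < M ->
  xtermR b (r * b * c / M) = r * b * c / M * (ln M - ln r - ln c).
Proof.
move=> b0 r0 c0 M0; rewrite /xtermR; case: eqVneq => [->|]; first by rewrite mul0r.
rewrite !mulf_eq0 !negb_or => /andP[/andP[/andP[rn bn] cn] _].
have [rp bp cp] : [/\ 0 < r, 0 < b & 0 < c] by rewrite !lt0r rn bn cn r0 b0 c0.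
by rewrite ln_div ?lnM ?posrE ?mulr_gt0 //; ring.
Qed.

Lemma sum_xtermR_eq B a b x r c (M : R) : (forall i j, 0 <= B i j) ->
  (forall i, 0 <= r i) -> (forall j, 0 <= c j) -> simplex a -> coupling a b x ->
  0 < M -> (forall i j, x i j = r i * B i j * c j / M) ->
  \sum_i \sum_j xtermR (B i j) (x i j) =
    ln M - \sum_i a i * ln (r i) - \sum_j b j * ln (c j).
Proof.
move=> B0 r0 c0 [_ a1] hx M0 xE.
rewrite -[ln M]mulr1 -{1}a1 -(coupling_sum_separable _ _ _ hx).
by apply: eq_bigr => i _; apply: eq_bigr => j _; rewrite xE xtermR_prod.
Qed.

End Entropy.

Section PowerCoordinates.
Variables (R : realType) (q : nat) (s : nat).
Implicit Types (B : 'M[R]_q) (x : 'I_q -> 'I_q -> R) (a b c r u w z : 'I_q -> R).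

Lemma natrS_sub1 (n : nat) : n.+1%:R - 1 = n%:R :> R.
Proof. by rewrite -natr1 addrK. Qed.

Lemma xlnx_pow (t : R) : 0 <= t ->
  s%:R * xlnx (t ^+ s.+1) = s.+1%:R * (t ^+ s.+1 * ln (t ^+ s)).
Proof.
rewrite le_eqVlt => /orP[/eqP <-|t0]; first by rewrite /xlnx expr0n eqxx !(mulr0, mul0r).
rewrite /xlnx gt_eqF ?exprn_gt0 // !lnXn //.
by rewrite -[ln t *+ s.+1]mulr_natr -[ln t *+ s]mulr_natr; ring.
Qed.

Lemma nonneg_sphere_simplex w : nonneg_sphere s w -> simplex (fun i => w i ^+ s.+1).
Proof. by move=> [w0 w1]; split=> // i; rewrite exprn_ge0. Qed.

Lemma nonneg_sphere_pow_nonzero w : nonneg_sphere s w -> nonneg_nonzero (fun i => w i ^+ s).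
Proof.
move=> Sw; have [w0 [i wi]] := nonneg_sphere_nonzero Sw.
by split=> [j|]; [exact: exprn_ge0 | exists i; exact: expf_neq0].
Qed.

Lemma simplex_root_sphere a : simplex a ->
  exists2 w, nonneg_sphere s w & a = (fun i => w i ^+ s.+1).
Proof.
move=> [a0 a1]; have aK i : (a i `^ s.+1%:R^-1) ^+ s.+1 = a i by rewrite powR_root.
exists (fun i => a i `^ s.+1%:R^-1); last by apply/funext => i; rewrite aK.
by split=> [i|]; [exact: powR_ge0 | under eq_bigr do rewrite aK].
Qed.

Lemma psi1_obj_pow B w z x : (forall i, 0 <= w i) -> (forall j, 0 <= z j) ->
  (forall i j, x i j != 0 -> B i j != 0) ->
  psi1_obj s.+1 B (fun i => w i ^+ s.+1) (fun j => z j ^+ s.+1) x =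
  (s.+1%:R * (\sum_i \sum_j xtermR (B i j) (x i j)
     + \sum_i w i ^+ s.+1 * ln (w i ^+ s) + \sum_j z j ^+ s.+1 * ln (z j ^+ s)))%:E.
Proof.
move=> w0 z0 xB; rewrite /psi1_obj sum_xterm_EFin // -EFinM -EFinD natrS_sub1.
have entropy_pow u : (forall i, 0 <= u i) ->
    s%:R * \sum_i xlnx (u i ^+ s.+1) = s.+1%:R * \sum_i u i ^+ s.+1 * ln (u i ^+ s).
  by move=> u0; rewrite !mulr_sumr; apply: eq_bigr => i _; rewrite xlnx_pow.
by rewrite mulrDr !entropy_pow //; congr (_%:E); ring.
Qed.

Lemma powR_pow_conj (t : R) : (0 < s)%N -> 0 <= t ->
  (t ^+ s) `^ (s.+1%:R / s%:R) = t ^+ s.+1.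
Proof.
move=> s0 t0; rewrite -powR_mulrn // -powRrM mulrCA mulfV ?mulr1 ?powR_mulrn //.
by rewrite pnatr_eq0 -lt0n.
Qed.

Lemma pnorm_pow_sphere w : (0 < s)%N -> nonneg_sphere s w ->
  pnorm (s.+1%:R / s%:R) (fun i => w i ^+ s) = 1.
Proof.
move=> s0 [w0 w1]; rewrite /pnorm (eq_bigr _ (fun i _ => powR_pow_conj s0 (w0 i))) w1.
by rewrite powR1.
Qed.

Lemma nonneg_sphere_pnormalized r : (0 < s)%N -> nonneg_nonzero r ->
  nonneg_sphere s (fun i => (r i / pnorm (s.+1%:R / s%:R) r) `^ s%:R^-1).
Proof.
move=> s0 hr; split=> [i|]; first exact: powR_ge0.
set p := s.+1%:R / s%:R; transitivity (\sum_i (r i / pnorm p r) `^ p).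
  by apply: eq_bigr => i _; rewrite -powR_mulrn ?powR_ge0 // -powRrM [s%:R^-1 * _]mulrC.
by rewrite sum_powR_div_pnorm // divr_gt0 ?ltr0n.
Qed.

Lemma bilin_pow_pnormalized B r c (p : R) : (0 < s)%N ->
  nonneg_nonzero r -> nonneg_nonzero c ->
  bilin_pow s B (fun i => (r i / pnorm p r) `^ s%:R^-1) (fun j => (c j / pnorm p c) `^ s%:R^-1)
  = bilin B r c / (pnorm p r * pnorm p c).
Proof.
move=> s0 hr hc; have rootK u : nonneg_nonzero u ->
    (fun i => ((u i / pnorm p u) `^ s%:R^-1) ^+ s) = (fun i => u i / pnorm p u).
  move=> hu; apply/funext => i.
  exact: powR_root s0 (divr_ge0 (hu.1 i) (ltW (pnorm_gt0 p hu))).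
transitivity (bilin B (fun i => r i / pnorm p r) (fun j => c j / pnorm p c)).
  by rewrite /bilin_pow; congr (bilin B _ _); exact: rootK.
rewrite /bilin mulr_suml; move: (pnorm p r) (pnorm p c) => Nr Nc.
apply: eq_bigr => i _; rewrite mulr_suml; apply: eq_bigr => j _.
by rewrite invfM; ring.
Qed.

End PowerCoordinates.

Section Extremal.
Variables (R : realType) (q s : nat) (B : 'M[R]_q) (M : R).
Hypotheses (B0 : forall i j, 0 <= B i j) (M0 : 0 < M).
Implicit Types (x : 'I_q -> 'I_q -> R) (a b r c w z : 'I_q -> R).

Section Stationary.
Variables w z : 'I_q -> R.
Hypotheses (Sw : nonneg_sphere s w) (Sz : nonneg_sphere s z).
Hypothesis w_stat : forall i, w i ^+ s.+1 * M = w i ^+ s * \sum_j B i j * z j ^+ s.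
Hypothesis z_stat : forall j, z j ^+ s.+1 * M = z j ^+ s * \sum_i w i ^+ s * B i j.

(* The stationarity equations are exactly the marginal constraints of this x. *)
Lemma psi1_obj_at_max : exists2 x,
  coupling (fun i => w i ^+ s.+1) (fun j => z j ^+ s.+1) x &
  psi1_obj s.+1 B (fun i => w i ^+ s.+1) (fun j => z j ^+ s.+1) x = (s.+1%:R * ln M)%:E.
Proof.
have [w0 _] := Sw; have [z0 _] := Sz.
pose x i j := w i ^+ s * B i j * z j ^+ s / M.
have hx : coupling (fun i => w i ^+ s.+1) (fun j => z j ^+ s.+1) x.
  split; [|split] => [i j|i|j].
  - by rewrite divr_ge0 ?mulr_ge0 ?exprn_ge0 ?(ltW M0).
  - rewrite -mulr_suml; under eq_bigr do rewrite -mulrA.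
    by rewrite -mulr_sumr -w_stat mulfK ?gt_eqF.
  - by rewrite -!mulr_suml [_ * z j ^+ s]mulrC -z_stat mulfK ?gt_eqF.
have xB i j : x i j != 0 -> B i j != 0.
  by rewrite /x !mulf_eq0 !negb_or => /andP[/andP[/andP[_ ->]]].
have pow_ge0 (u : 'I_q -> R) : (forall i, 0 <= u i) -> forall i, 0 <= u i ^+ s.
  by move=> u0 i; rewrite exprn_ge0.
exists x => //; rewrite psi1_obj_pow //.
rewrite (sum_xtermR_eq B0 (pow_ge0 _ w0) (pow_ge0 _ z0) (nonneg_sphere_simplex Sw) hx M0) //.
by congr (_%:E); ring.
Qed.

End Stationary.

Section UpperBound.
Hypothesis Mmax : forall w z,
  nonneg_sphere s w -> nonneg_sphere s z -> bilin_pow s B w z <= M.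

Lemma psi1_obj_le_max a b x : simplex a -> simplex b -> coupling a b x ->
  (psi1_obj s.+1 B a b x <= (s.+1%:R * ln M)%:E)%E.
Proof.
move=> ha hb hx.
have [[k [l [xkl Bkl]]]|xB] := pselect (exists i j, x i j != 0 /\ B i j = 0).
  by rewrite /psi1_obj (sum_xterm_Ny xkl Bkl) gt0_muleNy ?lte_fin ?ltr0Sn // addeNy leNye.
have {}xB i j : x i j != 0 -> B i j != 0.
  by move=> xij; apply/eqP => Bij; apply: xB; exists i, j.
have [w Sw aE] := simplex_root_sphere s ha; have [z Sz bE] := simplex_root_sphere s hb.
subst a b; have [w0 _] := Sw; have [z0 _] := Sz.
have pow_gt0 (t : R) : 0 <= t -> 0 < t ^+ s.+1 -> 0 < t ^+ s.
  move=> t0; rewrite !lt0r !exprn_ge0 // !andbT expf_eq0 /=; exact: expf_neq0.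
have supp i j : x i j != 0 -> [/\ 0 < B i j, 0 < w i ^+ s & 0 < z j ^+ s].
  move=> xij; have x0 : 0 < x i j by rewrite lt0r xij (hx.1 i j).
  split; first by rewrite lt0r xB ?B0.
  - by rewrite pow_gt0 // (lt_le_trans x0) // (coupling_le_row _ _ hx).
  - by rewrite pow_gt0 // (lt_le_trans x0) // (coupling_le_col _ _ hx).
have gibbs := sum_xtermR_le B0 (fun i => exprn_ge0 s (w0 i)) (fun j => exprn_ge0 s (z0 j))
  (nonneg_sphere_simplex Sw) hx supp M0 (Mmax Sw Sz).
rewrite psi1_obj_pow // lee_fin ler_wpM2l ?ler0n //; lra.
Qed.

Lemma Psi1_le_max a b : simplex a -> simplex b ->
  (Psi1 s.+1 B a b <= (s.+1%:R * ln M)%:E)%E.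
Proof.
by move=> ha hb; apply: ge_ereal_sup => _ [x hx <-]; exact: psi1_obj_le_max.
Qed.

Lemma Psi1_at_max w z : nonneg_sphere s w -> nonneg_sphere s z ->
  (forall i, w i ^+ s.+1 * M = w i ^+ s * \sum_j B i j * z j ^+ s) ->
  (forall j, z j ^+ s.+1 * M = z j ^+ s * \sum_i w i ^+ s * B i j) ->
  Psi1 s.+1 B (fun i => w i ^+ s.+1) (fun j => z j ^+ s.+1) = (s.+1%:R * ln M)%:E.
Proof.
move=> Sw Sz w_stat z_stat; apply/eqP.
rewrite eq_le (Psi1_le_max (nonneg_sphere_simplex Sw) (nonneg_sphere_simplex Sz)) /=.
have [x hx <-] := psi1_obj_at_max Sw Sz w_stat z_stat.
by apply: ereal_sup_ubound; exists x.
Qed.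

Hypothesis s0 : (0 < s)%N.

Lemma Phi_le_max r c : nonneg_nonzero r -> nonneg_nonzero c ->
  (Phi s.+1 B r c <= (s.+1%:R * ln M)%:E)%E.
Proof.
move=> hr hc; rewrite /Phi /= natrS_sub1; case: ifPn => [_|rc0]; first exact: leNye.
have := Mmax (nonneg_sphere_pnormalized s0 hr) (nonneg_sphere_pnormalized s0 hc).
rewrite bilin_pow_pnormalized //.
have := pnorm_gt0 (s.+1%:R / s%:R) hr; have := pnorm_gt0 (s.+1%:R / s%:R) hc.
move: (pnorm _ r) (pnorm _ c) => Nr Nc Nc0 Nr0 le_M.
have [[r0 _] [c0 _]] := (hr, hc).
have rc_gt0 : 0 < bilin B r c.
  by rewrite lt0r rc0 sumr_ge0 // => i _; rewrite sumr_ge0 // => j _; rewrite !mulr_ge0.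
rewrite lee_fin ler_wpM2l ?ler0n // ler_ln ?posrE ?divr_gt0 ?mulr_gt0 //.
Qed.

End UpperBound.

Lemma Phi_at_max w z : (0 < s)%N -> nonneg_sphere s w -> nonneg_sphere s z ->
  bilin_pow s B w z = M ->
  Phi s.+1 B (fun i => w i ^+ s) (fun j => z j ^+ s) = (s.+1%:R * ln M)%:E.
Proof.
move=> s0 Sw Sz wzM; rewrite /Phi /= natrS_sub1 !pnorm_pow_sphere // mulr1 divr1.
by rewrite -/(bilin_pow s B w z) wzM gt_eqF.
Qed.

End Extremal.

Section MaximaAgree.
Variables (R : realType) (q : nat).
Implicit Types (B : 'M[R]_q).

Definition Psi1_Phi_maxima_agree (D : nat) B : Prop :=
  exists (a b : 'I_q -> R) (r c : 'I_q -> R),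
    [/\ simplex a /\ simplex b, nonneg_nonzero r /\ nonneg_nonzero c,
        (forall a' b', simplex a' -> simplex b' -> (Psi1 D B a' b' <= Psi1 D B a b)%E),
        (forall r' c', nonneg_nonzero r' -> nonneg_nonzero c' ->
           (Phi D B r' c' <= Phi D B r c)%E)
      & Psi1 D B a b = Phi D B r c].

Lemma maxima_agree_zero_matrix D B : (0 < q)%N -> (0 < D)%N ->
  (forall i j, B i j = 0) -> Psi1_Phi_maxima_agree D B.
Proof.
move=> q0 D0 B0.
have Psi1_Ny a b : simplex a -> Psi1 D B a b = -oo%E.
  move=> ha; apply/eqP; rewrite eq_le leNye andbT; apply: ge_ereal_sup => _ [x hx <-].
  have [i [j xij]] := simplex_coupling_neq0 ha hx.
  by rewrite /psi1_obj (sum_xterm_Ny xij (B0 i j)) gt0_muleNy ?lte_fin ?ltr0n // addeNy.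
have Phi_Ny r c : Phi D B r c = -oo%E.
  have rc0 : bilin B r c = 0.
    by apply: big1 => i _; apply: big1 => j _; rewrite B0 mulr0 mul0r.
  by rewrite /Phi /= rc0 eqxx.
pose e := @unit_vec R q (Ordinal q0).
have Se : nonneg_sphere 0 e := @nonneg_sphere_unit_vec _ _ 0 _.
have He : simplex e by case: Se => e0; rewrite (eq_bigr _ (fun i _ => expr1 _)).
exists e, e, e, e; split.
- by [].
- by split; exact: (nonneg_sphere_nonzero Se).
- by move=> a b ha _; rewrite !Psi1_Ny.
- by move=> r c _ _; rewrite !Phi_Ny.
- by rewrite Psi1_Ny // Phi_Ny.
Qed.

Lemma maxima_agree_pos s B : (0 < q)%N -> (0 < s)%N -> (forall i j, 0 <= B i j) ->
  (exists i j, 0 < B i j) -> Psi1_Phi_maxima_agree s.+1 B.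
Proof.
move=> q0 s0 B0 [k [l Bkl]].
have [w [z [Sw Sz wz_max]]] := bilin_pow_max_attained s B q0.
set M := bilin_pow s B w z in wz_max.
have M0 : 0 < M.
  apply: (lt_le_trans Bkl); apply: le_trans (wz_max _ _ (@nonneg_sphere_unit_vec _ _ s k)
                                                  (@nonneg_sphere_unit_vec _ _ s l)).
  have := @ler_bilin_term _ _ B (fun i => @unit_vec R q k i ^+ s)
                                (fun j => @unit_vec R q l j ^+ s) k l B0.
  rewrite /unit_vec !eqxx expr1n mul1r mulr1; apply=> i; exact: exprn_ge0.
have [w_stat z_stat] := bilin_pow_argmax_stationary s0 B0 Sw Sz wz_max M0.
have Psi1E := Psi1_at_max B0 M0 wz_max Sw Sz w_stat z_stat.
have PhiE := Phi_at_max M0 s0 Sw Sz (erefl M).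
exists (fun i => w i ^+ s.+1), (fun j => z j ^+ s.+1), (fun i => w i ^+ s), (fun j => z j ^+ s).
split; rewrite ?Psi1E ?PhiE //.
- by split; exact: nonneg_sphere_simplex.
- by split; exact: nonneg_sphere_pow_nonzero.
- by move=> a b; exact: Psi1_le_max.
- by move=> r c; exact: Phi_le_max.
Qed.

End MaximaAgree.

Theorem lemma1 (R : realType) (q : nat) (D : nat) (B : 'M[R]_q) :
  (0 < q)%N -> (3 <= D)%N -> sym_nonneg_irreducible B ->
  exists (a b : 'I_q -> R) (r c : 'I_q -> R),
    [/\ simplex a /\ simplex b, nonneg_nonzero r /\ nonneg_nonzero c,
        (forall a' b', simplex a' -> simplex b' -> (Psi1 D B a' b' <= Psi1 D B a b)%E),
        (forall r' c', nonneg_nonzero r' -> nonneg_nonzero c' ->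
           (Phi D B r' c' <= Phi D B r c)%E)
      & Psi1 D B a b = Phi D B r c].
Proof.
move=> q0 D3 [_ [B0 _]].
(* Irreducibility allows the exponent k = 0, so it does not rule out B = 0. *)
have [[i [j Bij]]|B_zero] := pselect (exists i j, 0 < B i j).
  case: D D3 => [|s] // D3.
  by apply: maxima_agree_pos => //; [case: s D3 | exists i, j].
apply: maxima_agree_zero_matrix => // [|i j]; first exact: leq_trans D3.
by apply/eqP; rewrite eq_le B0 andbT leNgt; apply/negP => Bij; apply: B_zero; exists i, j.
Qed.
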